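(* Let $\ell>0$, $r>0$, $\lambda>0$, and let $G$ be a probability distribution on $[0,\infty)$ with finite mean. The greedy polling population process $W$ (described in the context) is $\phi$-irreducible and strongly aperiodic, where $\phi$ is the Dirac measure on $M_+(S)$ assigning unit mass to the zero counting measure. Moreover, for every integer $n\ge 0$, the level set $C_n=\{\zeta\in M_+(S):\|\zeta\|\le n\}$ is small for $W$.
   Context: $S$ is the circle of circumference $\ell$ with shortest-arc distance $d$ and uniform probability distribution $m$; $B_\rho(x)=\{y: d(x,y)<\rho\}$. $M_+(S)$ is the set of finite counting measures on $S$ with the sigma-algebra generated by $\zeta\mapsto\zeta(B)$; $\|\zeta\|=\zeta(S)$. For $x\in\zeta$ (i.e. $\zeta(\{x\})>0$), $\Gamma_\zeta(x)=\{y: d(x,y)<d(x',y)\ \forall x'\in\zeta,\ x'\ne x\}$. $W$ is the Markov chain on $M_+(S)$ with the following transition from $W_t=\zeta$: add $N$ customers at i.i.d. $m$-distributed locations, $P(N=n)=\int e^{-\lambda s}\frac{(\lambda s)^n}{n!}G(ds)$, giving $\zeta'$; then choose $U$ uniform on $S$; if $\zeta'(B_r(U))=0$ nothing changes, otherwise one customer at the atom of $\zeta'$ nearest to $U$ is removed (equivalently, for each $x\in\zeta'$ one customer at $x$ is removed with probability $m(B_r(x)\cap\Gamma_{\zeta'}(x))$). Irreducibility, strong aperiodicity and small sets are in the sense of Meyn and Tweedie: a set $C$ is small if there exist $k\ge1$ and a nonzero measure $\nu$ with $P^k(\zeta,B)\ge\nu(B)$ for all $\zeta\in C$ and measurable $B$.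 *)

From HB Require Import structures.
From mathcomp Require Import all_boot all_order all_algebra.
From mathcomp Require Import all_classical all_reals all_analysis.
Set Implicit Arguments.
Unset Strict Implicit.
Unset Printing Implicit Defensive.
Import Order.TTheory GRing.Theory Num.Theory.
Import numFieldNormedType.Exports.
Local Open Scope classical_set_scope.
Local Open Scope ring_scope.

(* The circle S of circumference l is represented by the points of [0, l)
   (coordinate along the circle); m is Lebesgue measure on [0,l) divided by l. *)

Section Greedy.
Variable R : realType.

Definition inS (l : R) (x : R) : bool := (0 <= x) && (x < l).

Definition cdist (l : R) (x y : R) : R := Num.min `|x - y| (l - `|x - y|).

Definition Sset (l : R) : set R := [set x | inS l x].

Definition unif (l : R) (A : set R) : \bar R :=
  ((l^-1)%:E * (@lebesgue_measure R) (A `&` Sset l))%E.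

(* finite counting measures on S: multiplicity functions with finite
   support contained in S *)
Record cm (l : R) := CM {
  cm_f : R -> nat ;
  cm_fin : exists s : seq R, forall x, cm_f x != 0%N -> x \in s ;
  cm_rng : forall x, cm_f x != 0%N -> inS l x }.

Variable l : R.

Definition cm_count (z : cm l) (B : set R) : nat :=
  \big[addn/0%N]_(x \in B) cm_f z x.

Definition cm_norm (z : cm l) : nat := cm_count z [set x | inS l x].

Definition cm_supp (z : cm l) : set R := [set x | cm_f z x != 0%N].

Lemma cm0_fin : exists s : seq R, forall x, (fun _ : R => 0%N) x != 0%N -> x \in s.
Proof. by exists [::]. Qed.
Lemma cm0_rng : forall x, (fun _ : R => 0%N) x != 0%N -> inS l x.
Proof. by []. Qed.
Definition cm0 : cm l := CM cm0_fin cm0_rng.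

Lemma cm_add_fin (z : cm l) (x : R) : exists s : seq R,
  forall y, (cm_f z y + ((y == x) && inS l x))%N != 0%N -> y \in s.
Proof.
case: (cm_fin z) => s hs; exists (x :: s) => y; rewrite in_cons.
have [-> //|ne] := eqVneq y x; rewrite /= addn0; exact: hs.
Qed.
Lemma cm_add_rng (z : cm l) (x : R) :
  forall y, (cm_f z y + ((y == x) && inS l x))%N != 0%N -> inS l y.
Proof.
move=> y; have [->|ne] := eqVneq y x; rewrite /=.
  case hx: (inS l x) => //=; rewrite addn0 => h; by have := cm_rng h; rewrite hx.
by rewrite addn0 => h; exact: (cm_rng h).
Qed.
(* zeta + delta_x (only if x lies on S; otherwise zeta unchanged) *)
Definition cm_add (z : cm l) (x : R) : cm l := CM (cm_add_fin z x) (@cm_add_rng z x).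

Lemma cm_rem_fin (z : cm l) (x : R) : exists s : seq R,
  forall y, (cm_f z y - (y == x))%N != 0%N -> y \in s.
Proof.
case: (cm_fin z) => s hs; exists s => y h; apply: hs.
by apply: contraNneq h => ->.
Qed.
Lemma cm_rem_rng (z : cm l) (x : R) :
  forall y, (cm_f z y - (y == x))%N != 0%N -> inS l y.
Proof. by move=> y h; apply: (@cm_rng _ z); apply: contraNneq h => ->. Qed.
Definition cm_rem (z : cm l) (x : R) : cm l := CM (cm_rem_fin z x) (@cm_rem_rng z x).

Definition cm_gen : set (set (cm l)) :=
  [set A | exists B : set R, exists k : nat,
     measurable B /\ B `<=` [set x | inS l x] /\ A = [set z | cm_count z B = k]].
Definition cm_meas : set (set (cm l)) := <<s cm_gen >>.

Variables (r lam : R) (G : probability R R).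

Definition cball (x : R) : set R := [set y | inS l y /\ cdist l x y < r].

Definition vcell (z : cm l) (x : R) : set R :=
  [set y | inS l y /\ forall x', cm_f z x' != 0%N -> x' != x ->
       cdist l x y < cdist l x' y].

(* probability that the customer removed is the one at atom x *)
Definition qrem (z : cm l) (x : R) : \bar R := unif l (cball x `&` vcell z x).

Definition pN (n : nat) : \bar R :=
  (\int[G]_s (expR (- (lam * s)) * (lam * s) ^+ n / (n`!)%:R)%:E)%E.

Local Open Scope ereal_scope.

(* effect of the removal step on a nonnegative test function g *)
Definition remop (g : cm l -> \bar R) (z : cm l) : \bar R :=
  \big[adde/0]_(x \in cm_supp z) (qrem z x * g (cm_rem z x))
  + (1 - \big[adde/0]_(x \in cm_supp z) qrem z x) * g z.

(* effect of adding n customers at i.i.d. m-distributed locations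
   (m = Lebesgue measure on [0,l) normalised by 1/l) *)
Fixpoint addop (n : nat) (g : cm l -> \bar R) (z : cm l) : \bar R :=
  match n with
  | 0%N => g z
  | n'.+1 => (l^-1)%:E *
      \int[@lebesgue_measure R]_(x in Sset l) addop n' g (cm_add z x)
  end.

(* one-step transition operator: (P g)(zeta) = E[g(W_1) | W_0 = zeta] *)
Definition Pop (g : cm l -> \bar R) (z : cm l) : \bar R :=
  \sum_(n <oo) (pN n * addop n (remop g) z).

Definition Pk (k : nat) (z : cm l) (B : set (cm l)) : \bar R :=
  iter k Pop (fun y => (\1_B y)%:E) z.

Definition is_measure_on (T : Type) (M : set (set T)) (nu : set T -> \bar R) :=
  nu set0 = 0 /\ (forall A, M A -> 0 <= nu A) /\
  (forall F : nat -> set T, (forall i, M (F i)) -> trivIset setT F ->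
     (fun n => \sum_(i < n) nu (F i)) @ \oo --> nu (\bigcup_i F i)).

Definition small_set (C : set (cm l)) : Prop :=
  cm_meas C /\
  exists k : nat, (1 <= k)%N /\ exists nu : set (cm l) -> \bar R,
    is_measure_on cm_meas nu /\ (exists B, cm_meas B /\ 0 < nu B) /\
    forall z B, C z -> cm_meas B -> nu B <= Pk k z B.

Definition phi_irreducible (phi : set (cm l) -> \bar R) : Prop :=
  forall B, cm_meas B -> 0 < phi B ->
    forall z, exists n : nat, (1 <= n)%N /\ 0 < Pk n z B.

Definition strongly_aperiodic : Prop :=
  exists C, cm_meas C /\ exists nu : set (cm l) -> \bar R,
    is_measure_on cm_meas nu /\ 0 < nu C /\
    forall z B, C z -> cm_meas B -> nu B <= Pk 1 z B.

Definition dirac_cm0 (B : set (cm l)) : \bar R := (\1_B cm0)%:E.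

End Greedy.

Arguments phi_irreducible {R} l r lam G phi.
Arguments strongly_aperiodic {R} l r lam G.
Arguments small_set {R} l r lam G C.
Arguments dirac_cm0 {R} l B.
Arguments Pk {R} l r lam G k z B.

From Pilot Require Import Defs.
From mathcomp Require Import all_boot all_order all_algebra.
From mathcomp Require Import all_classical all_reals all_analysis.
From mathcomp Require Import measurable_realfun lra.
Set Implicit Arguments.
Unset Strict Implicit.
Unset Printing Implicit Defensive.
Import Order.TTheory GRing.Theory Num.Theory.
Local Open Scope classical_set_scope.
Local Open Scope ring_scope.

(* From a state with at most k <= N customers the chain reaches the empty
   state in exactly k steps with probability at least c^k, where c > 0 depends
   only on N.  In one step nobody arrives with probability P(N = 0) > 0, and a
   nonempty state loses a customer with probability at least
   min(r, l/2) / ((N + 1) l): next to any atom x0 there is an arc of that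
   length inside B_r(x0); each of its points lies within r of its nearest atom
   x, hence in B_r(x) /\ Gamma(x) unless it is one of finitely many tie points,
   and since the atoms carry at most N customers one of these sets meets the
   arc in measure at least min(r, l/2) / (N + 1).  The empty state stays empty
   when nobody arrives.  This minorization P^k(z, .) >= c^k delta_0 gives
   smallness of C_N (k = N + 1), strong aperiodicity (C_0, k = 1) and
   delta_0-irreducibility (k = ||z|| + 1). *)

Lemma seq_argmin (R : realDomainType) (T : eqType) (s : seq T) (f : T -> R) x0 :
  x0 \in s -> exists2 x, x \in s & forall x', x' \in s -> f x <= f x'.
Proof.
elim: s x0 => [//|a [|b s] IH] x0 _.
  by exists a => [|x']; rewrite ?inE // => /eqP ->.
have [x xs x_min] := IH b (mem_head _ _).
case: (leP (f a) (f x)) => fax.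
  exists a => [|x']; first exact: mem_head.
  by rewrite in_cons => /orP[/eqP -> //|/x_min]; exact: le_trans.
exists x => [|x']; first by rewrite in_cons xs orbT.
by rewrite in_cons => /orP[/eqP ->|/x_min //]; exact: ltW.
Qed.

Lemma minr_cases (R : realDomainType) (u v : R) :
  (Num.min u v = u /\ u <= v) \/ (Num.min u v = v /\ v < u).
Proof.
case: (leP u v) => uv; first by left; split => //; exact: min_l.
by right; split => //; exact/min_r/ltW.
Qed.

Lemma normr_cases (R : realDomainType) (a : R) : (`|a| = a /\ 0 <= a) \/ (`|a| = - a /\ a < 0).
Proof.
case: (leP 0 a) => a0; first by left; split => //; exact: ger0_norm.
by right; split => //; exact: ltr0_norm.
Qed.

Lemma fsume_pigeonhole (R : realFieldType) (T : choiceType) (D : set T)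
    (F : T -> \bar R) (g : T -> nat) (N : nat) (c : R) :
  finite_set D -> 0 < c -> (forall x, D x -> 0 < g x)%N ->
  (\big[addn/0%N]_(x \in D) g x <= N)%N -> (c%:E <= \sum_(x \in D) F x)%E ->
  exists2 x, D x & ((c / N.+1%:R)%:E <= F x)%E.
Proof.
move=> Dfin c_gt0 g_gt0 gN cF; apply: contrapT => no_large.
set w := c / N.+1%:R; have w_gt0 : 0 < w by rewrite divr_gt0.
have F_le x : D x -> (F x <= (w * (g x)%:R)%:E)%E.
  move=> Dx; rewrite leNgt; apply/negP => Fx; apply: no_large; exists x => //.
  by apply: (le_trans _ (ltW Fx)); rewrite lee_fin ler_peMr ?(ltW w_gt0) // ler1n g_gt0.
have := le_trans cF (lee_fsum Dfin F_le).
rewrite fsumEFin // lee_fin -mulr_fsumr !fsbig_finite //= -natr_sum -fsbig_finite //.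
have : w * (\big[addn/0%N]_(x \in D) g x)%:R <= w * N%:R by rewrite ler_pM2l // ler_nat.
have : c = w * N.+1%:R by rewrite /w divfK // pnatr_eq0.
rewrite -addn1 natrD; lra.
Qed.

(* [Defs] writes finite sums of extended reals with [adde]; the library lemmas
   expect the convertible [+%E]. *)
Lemma fsbig_addeE (R : realType) (T : choiceType) (P : set T) (F : T -> \bar R) :
  \big[adde/0%E]_(x \in P) F x = (\sum_(x \in P) F x)%E.
Proof. by []. Qed.

Section CircleGeometry.
Variables (R : realType) (l : R).

Lemma Sset_itv : Sset l = `[0, l[%classic.
Proof. by apply/seteqP; split => x; rewrite /= in_itv. Qed.

Lemma measurable_Sset : measurable (Sset l).
Proof. by rewrite Sset_itv; exact: measurable_itv. Qed.

Lemma measurable_cdist x : measurable_fun setT (cdist l x).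
Proof.
have mnorm : measurable_fun setT (fun y : R => `|x - y|).
  exact/(measurableT_comp (@normr_measurable R setT))/measurable_funB.
have -> : cdist l x = (fun y => `|x - y|) \min (fun y => l - `|x - y|) by [].
exact/measurable_minr/measurable_funB.
Qed.

Lemma measurable_set_ltr (f g : R -> R) :
  measurable_fun setT f -> measurable_fun setT g -> measurable [set y | f y < g y].
Proof.
by move=> mf mg; rewrite -[X in measurable X]setTI; exact: measurable_fun_ltr.
Qed.

Lemma cdist_le_norm x y : cdist l x y <= `|x - y|.
Proof. by rewrite /cdist ge_min lexx. Qed.

Lemma cdist_tie x1 x2 y : inS l x1 -> inS l x2 -> x1 != x2 ->
  cdist l x1 y = cdist l x2 y ->
  y * 2 = x1 + x2 \/ y * 2 = x1 + x2 + l \/ y * 2 = x1 + x2 - l.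
Proof.
move=> /andP[x1_ge0 x1_lt] /andP[x2_ge0 x2_lt] /eqP x12 e; rewrite /cdist in e.
case: (minr_cases `|x1 - y| (l - `|x1 - y|)) => [[m1 h1]|[m1 h1]]; rewrite m1 in e;
case: (minr_cases `|x2 - y| (l - `|x2 - y|)) => [[m2 h2]|[m2 h2]]; rewrite m2 in e;
case: (normr_cases (x1 - y)) => [[n1 k1]|[n1 k1]]; rewrite n1 in e h1;
case: (normr_cases (x2 - y)) => [[n2 k2]|[n2 k2]]; rewrite n2 in e h2;
first [ by left; lra | by right; left; lra | by right; right; lra
      | by exfalso; lra | by exfalso; apply: x12; lra ].
Qed.

End CircleGeometry.

Section CountingMeasures.
Variables (R : realType) (l : R).
Implicit Types (z : cm l) (x : R).

Lemma cm_supp_finite z : finite_set (cm_supp z).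
Proof.
case: (cm_fin z) => s hs; apply: (@sub_finite_set _ _ [set` s]); last exact: finite_seq.
by move=> x /hs.
Qed.

Definition cm_atoms z : seq R := finmap.enum_fset (fset_set (cm_supp z)).

Lemma mem_cm_atoms z x : (x \in cm_atoms z) = (cm_f z x != 0%N).
Proof.
by rewrite in_fset_set; [apply/idP/idP; rewrite in_setE|exact: cm_supp_finite].
Qed.

Lemma cm_normE z (D : set R) : cm_supp z `<=` D -> D `<=` Sset l ->
  cm_norm z = \big[addn/0%N]_(x \in D) cm_f z x.
Proof.
move=> suppD DS; rewrite /cm_norm /cm_count -(fsbig_widen D [set x | inS l x]) //.
move=> x [_ Dx] /=.
by apply/eqP; apply: contraT => zx; case: Dx; exact: suppD.
Qed.

Lemma cm_norm_supp z : cm_norm z = \big[addn/0%N]_(x \in cm_supp z) cm_f z x.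
Proof. by apply: cm_normE => // x; exact: cm_rng. Qed.

Lemma cm_norm_rem z x : cm_f z x != 0%N -> cm_norm z = (cm_norm (cm_rem z x)).+1.
Proof.
move=> zx; have fin := cm_supp_finite z.
have supp_rem : cm_supp (cm_rem z x) `<=` cm_supp z.
  by move=> y; rewrite /cm_supp /=; apply: contra_neq => ->.
rewrite cm_norm_supp (cm_normE supp_rem); last by move=> y; exact: cm_rng.
rewrite (fsbigD1 x (cm_supp z)) // (fsbigD1 x (cm_supp z)) //= eqxx subn1.
rewrite -addSn prednK ?lt0n //; congr addn.
by apply: eq_fsbigr => y; rewrite inE => -[_ /eqP /negbTE ->]; rewrite subn0.
Qed.

Lemma cm_norm_eq0 z : cm_norm z = 0%N -> z = cm0 l.
Proof.
move=> z0; case: z z0 => f f_fin f_rng z0.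
have f0 : f = fun=> 0%N.
  apply/funext => x; apply/eqP; apply: contraT => fx.
  by move: z0; rewrite (cm_norm_rem (z := CM f_fin f_rng) fx).
by subst f; congr CM; exact: Prop_irrelevance.
Qed.

Lemma cm_norm_cm0 : cm_norm (cm0 l) = 0%N.
Proof.
rewrite cm_norm_supp (_ : cm_supp _ = set0) ?fsbig_set0 //.
by apply/seteqP; split => x.
Qed.

Lemma cm_norm_gt0_atom z : (0 < cm_norm z)%N -> exists x, cm_f z x != 0%N.
Proof.
move=> z_gt0; apply: contrapT => /forallNP noatom; move: z_gt0.
rewrite cm_norm_supp (_ : cm_supp z = set0) ?fsbig_set0 //.
by apply/seteqP; split => // x /= /eqP zx; apply: (noatom x); exact/eqP.
Qed.

Lemma cm_meas_norm_le n : cm_meas [set z : cm l | (cm_norm z <= n)%N].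
Proof.
pose level k := [set z : cm l | cm_count z (Sset l) = k].
have -> : [set z : cm l | (cm_norm z <= n)%N] =
    \bigcup_k (if (k <= n)%N then level k else set0).
  apply/seteqP; split => z /=; first by move=> zn; exists (cm_norm z); rewrite ?zn.
  by move=> [k _]; case: ifP => // kn zk; exact: leq_trans (eq_leq zk) kn.
apply: sigma_algebra_bigcup => k; case: ifP => _; last first.
  by case: (smallest_sigma_algebra setT (@cm_gen R l)).
apply: sub_gen_smallest; exists (Sset l), k; split; first exact: measurable_Sset.
by split.
Qed.

Lemma is_measure_on_scaled_dirac (a : R) : 0 <= a ->
  is_measure_on (@cm_meas R l) (fun B => (a%:E * dirac_cm0 l B)%E).
Proof.
move=> a_ge0; rewrite /dirac_cm0; split; first by rewrite indicE memNset // mule0.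
split; first by move=> A _; rewrite mule_ge0 // lee_fin indic_ge0.
move=> F _ tF.
have [[j Fj]|nF] := pselect (exists j, F j (cm0 l)); last first.
  rewrite indicE memNset /= ?mule0; last by move=> [i _ Fi]; apply: nF; exists i.
  apply: cvg_near_cst; near=> k; rewrite big1 // => i _.
  by rewrite indicE memNset ?mule0 // => Fi; apply: nF; exists i.
rewrite indicE mem_set /= ?mule1; last by exists j.
apply: cvg_near_cst; near=> k.
have jk : (j < k)%N by near: k; exists j.+1.
rewrite (bigD1 (Ordinal jk)) //= indicE mem_set //= mule1 big1 ?adde0 //.
move=> i /eqP ij; rewrite indicE memNset ?mule0 // => Fi; apply: ij.
by apply: val_inj; apply: (tF i j) => //; exists (cm0 l).
Unshelve. all: by end_near.
Qed.

End CountingMeasures.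




Section RemovalRegions.
Variables (R : realType) (l r : R).
Hypotheses (l_gt0 : 0 < l) (r_gt0 : 0 < r).
Local Notation mu := (@lebesgue_measure R).
Implicit Types (z : cm l) (x y : R).

Lemma lebesgue_Sset : mu (Sset l) = l%:E.
Proof.
by rewrite Sset_itv lebesgue_measure_itv /= lte_fin l_gt0 -EFinB subr0.
Qed.

Definition rem_region z x := cball l r x `&` vcell z x `&` Sset l.

Lemma qremE z x : qrem r z x = ((l^-1)%:E * mu (rem_region z x))%E.
Proof. by []. Qed.

Lemma measurable_cball x : measurable (cball l r x).
Proof.
rewrite (_ : cball l r x = Sset l `&` [set y | cdist l x y < r]) //.
apply: measurableI; first exact: measurable_Sset.
exact: measurable_set_ltr (measurable_cdist l x) (measurable_cst r).
Qed.

Lemma measurable_vcell z x : measurable (vcell z x).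
Proof.
have -> : vcell z x = Sset l `&` \bigcap_(x' in [set x' | cm_f z x' != 0%N /\ x' != x])
    [set y | cdist l x y < cdist l x' y].
  apply/seteqP; split => y [yS y_near]; split => // x'.
    by move=> [? ?]; exact: y_near.
  by move=> ? ?; exact: y_near.
apply: measurableI; first exact: measurable_Sset.
apply: fin_bigcap_measurable => [|x' _].
  by apply: sub_finite_set (cm_supp_finite z) => x' [].
exact: measurable_set_ltr (measurable_cdist l x) (measurable_cdist l x').
Qed.

Lemma measurable_rem_region z x : measurable (rem_region z x).
Proof.
apply: measurableI; last exact: measurable_Sset.
exact: measurableI (measurable_cball x) (measurable_vcell z x).
Qed.

Lemma trivIset_rem_region z : trivIset (cm_supp z) (rem_region z).
Proof.
move=> i j zi zj [y [[[_ [_ i_near]] _] [[_ [_ j_near]] _]]].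
apply: contrapT => /eqP ij.
have ji : j != i by rewrite eq_sym.
by have := lt_trans (j_near i zi ij) (i_near j zj ji); rewrite ltxx.
Qed.

Lemma sum_lebesgue_rem_region z :
  (\sum_(x \in cm_supp z) mu (rem_region z x))%E =
  mu (\bigcup_(x in cm_supp z) rem_region z x).
Proof.
rewrite measure_fin_bigcup //; first exact: cm_supp_finite.
- exact: trivIset_rem_region.
- by move=> x _; exact: measurable_rem_region.
Qed.

Lemma sum_qrem_le1 z : (\big[adde/0%E]_(x \in cm_supp z) qrem r z x <= 1)%E.
Proof.
rewrite fsbig_addeE; under eq_fsbigr do rewrite qremE.
rewrite -ge0_mule_fsumr // sum_lebesgue_rem_region.
rewrite -(@mulVf _ l) ?gt_eqF // EFinM -lebesgue_Sset.
apply: lee_wpmul2l; first by rewrite lee_fin invr_ge0 ltW.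
apply: le_measure; rewrite ?inE; last by move=> y [x _ []].
- apply: fin_bigcup_measurable; first exact: cm_supp_finite.
  by move=> x _; exact: measurable_rem_region.
- exact: measurable_Sset.
Qed.

Definition tie_points (s : seq R) : seq R :=
  [seq (p.1 + p.2 + c) / 2 | p <- [seq (x1, x2) | x1 <- s, x2 <- s],
                             c <- [:: 0; l; - l]].

Lemma cball_sub_rem_regions z x0 : cm_f z x0 != 0%N ->
  cball l r x0 `<=`
  (\bigcup_(x in cm_supp z) rem_region z x) `|` [set` tie_points (cm_atoms z)].
Proof.
move=> zx0 y [yS y_near].
pose s := cm_atoms z; have atomsE := mem_cm_atoms z.
have x0s : x0 \in s by rewrite atomsE.
have [x zx x_min] := seq_argmin (cdist l ^~ y) x0s.
have [tie|no_tie] := boolP (y \in tie_points s); first by right.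
move: zx; rewrite atomsE => zx; left; exists x => //.
split => //; split; first by split => //; exact: le_lt_trans (x_min x0 _) y_near.
split => // x' zx' x'x.
rewrite lt_neqAle x_min ?atomsE // andbT; apply: contraNneq no_tie => tie.
have pair_in : (x, x') \in [seq (x1, x2) | x1 <- s, x2 <- s].
  by apply: allpairs_f; rewrite atomsE.
have mem_tie c : c \in [:: 0; l; - l] -> y = (x + x' + c) / 2 -> y \in tie_points s.
  by move=> cin ->; exact: (allpairs_f (fun p c => (p.1 + p.2 + c) / 2) pair_in cin).
have xx' : x != x' by rewrite eq_sym.
have [e|[e|e]] := cdist_tie (cm_rng zx) (cm_rng zx') xx' tie.
- by apply: (mem_tie 0); rewrite ?inE ?eqxx //; lra.
- by apply: (mem_tie l); rewrite ?inE ?eqxx ?orbT //; lra.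
- by apply: (mem_tie (- l)); rewrite ?inE ?eqxx ?orbT //; lra.
Qed.

Definition arc_len := Num.min r (l / 2).

Lemma arc_len_gt0 : 0 < arc_len.
Proof. by rewrite lt_min r_gt0 divr_gt0. Qed.

Lemma arc_len_le_half : arc_len <= l / 2.
Proof. by rewrite ge_min lexx orbT. Qed.

Lemma arc_sub_cball x0 : inS l x0 ->
  exists a, `]a, a + arc_len[%classic `<=` cball l r x0.
Proof.
move=> /andP[x0_ge0 x0_lt]; have len_gt0 := arc_len_gt0.
have len_half := arc_len_le_half; have len_r : arc_len <= r by rewrite ge_min lexx.
case: (leP (x0 + arc_len) l) => x0_len.
- exists x0 => y; rewrite /= in_itv /= => /andP[y_gt y_lt].
  split; first by apply/andP; split; lra.
  by apply: le_lt_trans (cdist_le_norm _ _ _) _; rewrite ler0_norm; lra.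
- exists (x0 - arc_len) => y; rewrite /= in_itv /= => /andP[y_gt y_lt].
  split; first by apply/andP; split; lra.
  by apply: le_lt_trans (cdist_le_norm _ _ _) _; rewrite ger0_norm; lra.
Qed.

Lemma lebesgue_rem_regions_ge z x0 : cm_f z x0 != 0%N ->
  (arc_len%:E <= \sum_(x \in cm_supp z) mu (rem_region z x))%E.
Proof.
move=> zx0; have [a arc_sub] := arc_sub_cball (cm_rng zx0).
have mU : measurable (\bigcup_(x in cm_supp z) rem_region z x).
  apply: fin_bigcup_measurable; first exact: cm_supp_finite.
  by move=> x _; exact: measurable_rem_region.
have mT : measurable [set` tie_points (cm_atoms z)].
  apply: countable_measurable; first by move=> t; exact: measurable_set1.
  exact/finite_set_countable/finite_seq.
have -> : arc_len%:E = mu `]a, a + arc_len[%classic.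
  by rewrite lebesgue_measure_itv /= lte_fin ltrDl arc_len_gt0 -EFinB addrAC subrr add0r.
rewrite sum_lebesgue_rem_region.
have mI : `]a, a + arc_len[%classic \in measurable by rewrite inE; exact: measurable_itv.
have mUT : (\bigcup_(x in cm_supp z) rem_region z x) `|` [set` tie_points (cm_atoms z)]
    \in measurable by rewrite inE; exact: measurableU.
have arc_cover := subset_trans arc_sub (cball_sub_rem_regions zx0).
apply: (le_trans (@le_measure _ _ _ mu _ _ mI mUT arc_cover)).
apply: (le_trans (measureU2 mu mU mT)).
rewrite [X in (_ + X)%E]countable_lebesgue_measure0 ?adde0 //.
exact: finite_set_countable (finite_seq _).
Qed.

Definition rem_prob_lb (N : nat) : R := l^-1 * (arc_len / N.+1%:R).

Lemma rem_prob_lb_gt0 N : 0 < rem_prob_lb N.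
Proof. by rewrite mulr_gt0 ?invr_gt0 // divr_gt0 ?arc_len_gt0. Qed.

Lemma rem_prob_lb_le1 N : rem_prob_lb N <= 1.
Proof.
have len_gt0 := arc_len_gt0; have len_half := arc_len_le_half.
have len_div : arc_len / N.+1%:R <= arc_len.
  by rewrite ler_pdivrMr ?ltr0Sn // ler_peMr ?(ltW len_gt0) // ler1n.
rewrite /rem_prob_lb mulrC ler_pdivrMr // mul1r (le_trans len_div) //.
by apply: le_trans len_half _; rewrite ler_pdivrMr // ler_peMr ?(ltW l_gt0) // ler1n.
Qed.

Lemma exists_qrem_ge z N : (cm_norm z <= N)%N -> (0 < cm_norm z)%N ->
  exists2 x, cm_f z x != 0%N & ((rem_prob_lb N)%:E <= qrem r z x)%E.
Proof.
move=> zN z_gt0; have [x0 zx0] := cm_norm_gt0_atom z_gt0.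
have atom_gt0 x : cm_supp z x -> (0 < cm_f z x)%N by rewrite lt0n.
have [x zx share] := fsume_pigeonhole (cm_supp_finite z) arc_len_gt0 atom_gt0
  (leq_trans (eq_leq (esym (cm_norm_supp z))) zN) (lebesgue_rem_regions_ge zx0).
exists x => //; rewrite qremE /rem_prob_lb EFinM.
by apply: lee_wpmul2l => //; rewrite lee_fin invr_ge0 ltW.
Qed.

End RemovalRegions.

Section ArrivalProbabilities.
Variables (R : realType) (lam : R) (G : probability R R).
Hypotheses (lam_gt0 : 0 < lam) (G_ge0 : G `[0, +oo[%classic = 1%E).

Definition poisson_weight n (s : R) : \bar R :=
  (expR (- (lam * s)) * (lam * s) ^+ n / (n`!)%:R)%:E.

Lemma measurable_poisson_weight n : measurable_fun setT (poisson_weight n).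
Proof.
apply/measurable_EFinP; have mlam : measurable_fun setT (fun s : R => lam * s).
  rewrite (_ : (fun s => lam * s) = *%R^~ lam); first exact: mulrr_measurable.
  by apply/funext => s; rewrite mulrC.
apply/measurable_funM/measurable_cst/measurable_funM; last exact: measurable_funX.
exact: measurableT_comp (@measurable_expR R) (measurable_funN mlam).
Qed.

Lemma poisson_weight_ge0 n (s : R) : 0 <= s -> (0 <= poisson_weight n s)%E.
Proof.
move=> s_ge0; rewrite lee_fin mulr_ge0 ?invr_ge0 // mulr_ge0 ?expR_ge0 //.
by rewrite exprn_ge0 // mulr_ge0 ?(ltW lam_gt0).
Qed.

Lemma probability_lt0 : G `]-oo, 0[%classic = 0%E.
Proof. by rewrite -setCitvr probability_setC // G_ge0 subee. Qed.

Lemma pN_itv n : pN lam G n = (\int[G]_(s in `[0%R, +oo[%classic) poisson_weight n s)%E.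
Proof.
have itv_split : [set: R] = `[0, +oo[%classic `|` `]-oo, 0[%classic.
  by rewrite -setCitvr setUv.
rewrite /pN -/(poisson_weight n) itv_split integral_setU //; first last.
- by apply/disj_setPS; rewrite -setCitvr setICr.
- exact: measurable_funS (measurable_poisson_weight n).
rewrite [X in (_ + X)%E]null_set_integral ?adde0 //; last exact: probability_lt0.
exact: measurable_funS (measurable_poisson_weight n).
Qed.

Lemma pN_ge0 n : (0 <= pN lam G n)%E.
Proof.
rewrite pN_itv; apply: integral_ge0 => s; rewrite /= in_itv /= andbT.
exact: poisson_weight_ge0.
Qed.

Lemma pN0_gt0 : exists2 p0 : R, 0 < p0 & (p0%:E <= pN lam G 0)%E.
Proof.
have [M GM_gt0] : exists M : nat, (0 < G `[0%R, M%:R]%classic)%E.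
  apply: contrapT => /forallNP G_null.
  have : (G `[0%R, +oo[%classic <= \sum_(k <oo) G `[0%R, k%:R]%classic)%E.
    apply: measure_sigma_subadditive => // x; rewrite /= in_itv /= andbT => x_ge0.
    by exists (Num.truncn x).+1 => //=; rewrite in_itv /= x_ge0 ltW // truncnS_gt.
  rewrite eseries0 ?G_ge0 ?lee_fin ?ler10 // => k _ _.
  by apply/eqP; rewrite eq_le measure_ge0 andbT leNgt; exact/negP/G_null.
have GM_fin : G `[0%R, M%:R]%classic \is a fin_num by exact: fin_num_measure.
exists (expR (- (lam * M%:R)) * fine (G `[0%R, M%:R]%classic)).
  by rewrite mulr_gt0 ?expR_gt0 // fine_gt0 // GM_gt0 ltey_eq GM_fin.
rewrite pN_itv EFinM fineK // -integral_cst //.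
have restrict : (\int[G]_(s in `[0%R, M%:R]%classic) poisson_weight 0 s <=
    \int[G]_(s in `[0%R, +oo[%classic) poisson_weight 0 s)%E.
  apply: ge0_subset_integral => //.
  - exact: measurable_funS (measurable_poisson_weight 0).
  - by move=> s; rewrite /= in_itv /= andbT; exact: poisson_weight_ge0.
  - by move=> s; rewrite /= !in_itv /= => /andP[-> _].
apply: (le_trans _ restrict); apply: ge0_le_integral => //.
- by move=> s _; rewrite lee_fin expR_ge0.
- exact: measurable_funS (measurable_poisson_weight 0).
- move=> s; rewrite /= in_itv /= => /andP[s_ge0 sM].
  rewrite /poisson_weight lee_fin expr0 mulr1 divr1 ler_expR lerN2.
  by rewrite ler_wpM2l // ltW.
Qed.

End ArrivalProbabilities.

Section TransitionBounds.
Variables (R : realType) (l r lam : R) (G : probability R R).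
Hypotheses (l_gt0 : 0 < l) (r_gt0 : 0 < r) (lam_gt0 : 0 < lam).
Hypothesis G_ge0 : G `[0, +oo[%classic = 1%E.
Implicit Types (z : cm l) (g : cm l -> \bar R).

Local Open Scope ereal_scope.

Lemma qrem_ge0 z x : 0 <= qrem r z x.
Proof. by rewrite qremE mule_ge0 ?measure_ge0 // lee_fin invr_ge0 ltW. Qed.

Lemma remop_ge0 g : (forall w, 0 <= g w) -> forall z, 0 <= remop r g z.
Proof.
move=> g_ge0 z; rewrite /remop adde_ge0 //.
  by rewrite fsbig_addeE fsume_ge0 // => x _; rewrite mule_ge0 ?qrem_ge0.
by rewrite mule_ge0 // sube_ge0 ?sum_qrem_le1 // orbT.
Qed.

Lemma addop_ge0 g : (forall w, 0 <= g w) -> forall n z, 0 <= addop n g z.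
Proof.
move=> g_ge0; elim => [|n IH] z //=.
by rewrite mule_ge0 ?lee_fin ?invr_ge0 ?(ltW l_gt0) //; apply: integral_ge0 => x _.
Qed.

Lemma Pop_ge_remop g : (forall w, 0 <= g w) ->
  forall z, pN lam G 0 * remop r g z <= Pop r lam G g z.
Proof.
move=> g_ge0 z; rewrite /Pop.
have := @nneseries_lim_ge R (fun n => pN lam G n * addop n (remop r g) z) xpredT 0 1.
rewrite big_nat1; apply => n _ _.
by rewrite mule_ge0 ?pN_ge0 // addop_ge0 // => w; exact: remop_ge0.
Qed.

Lemma Pop_ge0 g : (forall w, 0 <= g w) -> forall z, 0 <= Pop r lam G g z.
Proof.
move=> g_ge0 z; apply: le_trans (Pop_ge_remop g_ge0 z).
by rewrite mule_ge0 ?pN_ge0 ?remop_ge0.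
Qed.

Lemma PkS k z B : Pk l r lam G k.+1 z B = Pop r lam G (fun w => Pk l r lam G k w B) z.
Proof. by []. Qed.

Lemma Pk_ge0 k z B : 0 <= Pk l r lam G k z B.
Proof.
elim: k z => [|k IH] z; first by rewrite /Pk lee_fin indicE ler0n.
by rewrite PkS Pop_ge0.
Qed.

Lemma remop_ge_qrem g : (forall w, 0 <= g w) ->
  forall z x, cm_f z x != 0%N -> qrem r z x * g (cm_rem z x) <= remop r g z.
Proof.
move=> g_ge0 z x zx; rewrite /remop !fsbig_addeE.
have fin_supp := cm_supp_finite z.
rewrite (fsbigD1 x _ (fun y => qrem r z y * g (cm_rem z y))) //=.
apply: (le_trans (leeDl _ _)); last apply: leeDl.
  by rewrite fsume_ge0 // => y _; rewrite mule_ge0 ?qrem_ge0.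
by rewrite mule_ge0 // sube_ge0 -?fsbig_addeE ?sum_qrem_le1 // orbT.
Qed.

Lemma remop_cm0 g : remop r g (cm0 l) = g (cm0 l).
Proof.
rewrite /remop (_ : cm_supp (cm0 l) = set0); last by apply/seteqP; split.
by rewrite !fsbig_addeE !fsbig_set0 add0e sube0 mul1e.
Qed.

Lemma Pk_ge_dirac N p0 : (0 < p0)%R -> p0%:E <= pN lam G 0 ->
  forall k z B, (cm_norm z <= k <= N)%N ->
  ((p0 * rem_prob_lb l r N) ^+ k)%:E * dirac_cm0 l B <= Pk l r lam G k z B.
Proof.
move=> p0_gt0 p0_le; set q := rem_prob_lb l r N; set c := (p0 * q)%R.
have q_gt0 : (0 < q)%R := rem_prob_lb_gt0 l_gt0 r_gt0 N.
have q_le1 : (q <= 1)%R := rem_prob_lb_le1 l_gt0 r_gt0 N.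
have c_ge0 k B : 0 <= (c ^+ k)%:E * dirac_cm0 l B.
  rewrite /dirac_cm0 -EFinM lee_fin mulr_ge0 ?indicE ?ler0n //.
  by rewrite exprn_ge0 // mulr_ge0 ?ltW.
elim=> [|k IH] z B /andP[zk kN].
  have -> : z = cm0 l by apply: cm_norm_eq0; apply/eqP; rewrite -leqn0.
  by rewrite expr0 mul1e.
pose g w := Pk l r lam G k w B.
have g_ge0 w : 0 <= g w by exact: Pk_ge0.
have IHk w : (cm_norm w <= k)%N -> (c ^+ k)%:E * dirac_cm0 l B <= g w.
  by move=> wk; apply: IH; rewrite wk ltnW.
have step : q%:E * ((c ^+ k)%:E * dirac_cm0 l B) <= remop r g z.
  have [z0|z_gt0] := posnP (cm_norm z).
    (* Nobody is served in the empty state; [q <= 1] absorbs the missing factor. *)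
    rewrite (cm_norm_eq0 z0) remop_cm0.
    apply: le_trans (IHk _ _); last by rewrite cm_norm_cm0.
    by rewrite -[X in _ <= X]mul1e lee_wpmul2r // lee_fin.
  have [x zx qx] := exists_qrem_ge l_gt0 r_gt0 (leq_trans zk kN) z_gt0.
  apply: le_trans (remop_ge_qrem g_ge0 zx); apply: lee_pmul => //.
    by rewrite lee_fin ltW.
  by apply: IHk; rewrite -ltnS -cm_norm_rem.
have -> : (c ^+ k.+1)%:E * dirac_cm0 l B = p0%:E * (q%:E * ((c ^+ k)%:E * dirac_cm0 l B)).
  by rewrite /dirac_cm0 -!EFinM exprS /c !mulrA.
rewrite PkS; apply: (le_trans _ (Pop_ge_remop g_ge0 z)); apply: lee_pmul => //.
- by rewrite lee_fin ltW.
- by rewrite mule_ge0 // lee_fin ltW.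
Qed.

End TransitionBounds.

Theorem lemma1 (R : realType) (l r lam : R) (G : probability R R) :
  0 < l -> 0 < r -> 0 < lam ->
  G `[0, +oo[%classic = 1%E ->
  G.-integrable setT (fun s : R => s%:E) ->
  phi_irreducible l r lam G (dirac_cm0 l) /\
  strongly_aperiodic l r lam G /\
  (forall n : nat, small_set l r lam G [set z : cm l | (cm_norm z <= n)%N]).
Proof.
move=> l_gt0 r_gt0 lam_gt0 G_ge0 _.
have [p0 p0_gt0 p0_le] := pN0_gt0 lam_gt0 G_ge0.
pose c N := p0 * rem_prob_lb l r N.
have c_gt0 N : 0 < c N by rewrite mulr_gt0 ?rem_prob_lb_gt0.
pose nu N k B := ((c N ^+ k)%:E * dirac_cm0 l B)%E.
have nu_measure N k : is_measure_on (@cm_meas R l) (nu N k).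
  by apply: is_measure_on_scaled_dirac; rewrite exprn_ge0 ?ltW.
have nu_cm0 N k : (0 < nu N k [set z : cm l | (cm_norm z <= 0)%N])%E.
  rewrite /nu /dirac_cm0 indicE mem_set /=; last by rewrite cm_norm_cm0.
  by rewrite mule1 lte_fin exprn_gt0.
have Pk_ge N k z B : (cm_norm z <= k <= N)%N -> (nu N k B <= Pk l r lam G k z B)%E.
  exact: Pk_ge_dirac.
split; [|split].
- move=> B _ B_gt0 z; exists (cm_norm z).+1; split => //.
  apply: lt_le_trans (Pk_ge _ _ z B _); last by rewrite leqnSn /=.
  by rewrite mule_gt0 // lte_fin exprn_gt0.
- exists [set z : cm l | (cm_norm z <= 0)%N]; split; first exact: cm_meas_norm_le.
  exists (nu 1%N 1%N); do 2?split => //.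
  by move=> z B z0 _; apply: Pk_ge; rewrite (leq_trans z0).
- move=> n; split; first exact: cm_meas_norm_le.
  exists n.+1; split => //; exists (nu n.+1 n.+1); do 2?split => //.
    by exists [set z : cm l | (cm_norm z <= 0)%N]; split; first exact: cm_meas_norm_le.
  by move=> z B zn _; apply: Pk_ge; rewrite (leqW zn) ltnSn.
Qed.
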